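(* Let $C$ be a finite non-degenerate projective configuration with lines $l_0,l_1,\dots,l_n$, let $\mathcal{P}_0$ be the set of its points not incident to $l_0$, and let $\mathcal{A}=\{(i,p)\in\{1,\dots,n\}\times\mathcal{P}_0 : p \text{ is incident to } l_i\}$. Let $L=\bigoplus_{k\ge1}L_k$ be the free Lie algebra over $\mathbb{Z}$ on $x_1,\dots,x_n$, graded by degree, $H=L_1$, $S_p=\sum_{j:\,p\prec l_j}x_j$ for $p\in\mathcal{P}_0$ (sum over $j\in\{1,\dots,n\}$), $R_2\subset L_2$ the subgroup spanned by the elements $\bar r(i,p)=[x_i,S_p]$ for $(i,p)\in\mathcal{A}$ with $i\neq\min\{j: l_j\succ p\}$ (these elements form a $\mathbb{Z}$-basis of $R_2$), $R_3=[H,R_2]\subset L_3$ and $P_3=L_3/R_3$. Let $A=H^{\mathcal{A}}$ (all maps $\mathcal{A}\to H$) and define $\tilde\tau:A\to\mathrm{Hom}(R_2,P_3)$ on the basis of $R_2$ by $$\tilde\tau a(\bar r(i,p))=[[x_i,a(i,p)],S_p]+\Big[x_i,\sum_{j:\,p\prec l_j}[x_j,a(j,p)]\Big]+R_3 .$$ Let $U\subseteq A$ be the subgroup generated by the following elements: $a^{(0)}_{i,p}$ for $(i,p)\in\mathcal{A}$, given by $a^{(0)}_{i,p}(j,q)=\delta_{i,j}\delta_{p,q}x_i$; $a^{(1)}_{i,p}$ for $i\in\{1,\dots,n\}$, $p\in\mathcal{P}_0$, given by $a^{(1)}_{i,p}(j,q)=\delta_{p,q}x_i$; and $a^{(2)}_{i,p_1,p_2}$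 for $i\in\{1,\dots,n\}$ and $p_1,p_2\in\mathcal{P}_0$ both incident to $l_i$ (not necessarily distinct), given by $a^{(2)}_{i,p_1,p_2}(j,q)=\delta_{i,j}\delta_{p_1,q}S_{p_2}$. Then $U\subseteq\ker\tilde\tau$.
   Context: A projective configuration is a triple $(\mathcal{L},\mathcal{P},\succ)$ of a set of lines $\mathcal{L}$, a set of points $\mathcal{P}$ and an incidence relation $\succ$ between lines and points (written $l\succ p$ or $p\prec l$) such that any two distinct lines are incident to a unique common point, and every point is incident to at least two lines. It is non-degenerate if it has more than one point. $[\cdot,\cdot]$ denotes the Lie bracket in $L$. *)

From HB Require Import structures.
From mathcomp Require Import all_boot all_order all_algebra.
Set Implicit Arguments. Unset Strict Implicit. Unset Printing Implicit Defensive.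
Import Order.TTheory GRing.Theory Num.Theory.
Local Open Scope ring_scope.

(* Noncommutative formal power series over Z in variables x_0..x_{n-1}
   (indices shifted by one w.r.t. the paper: ordinal i : 'I_n stands for
   x_{i+1}).  The free Lie ring
   over Z on the x_i is realised (Magnus/Witt embedding) as the Lie
   subring generated by the x_i for the commutator bracket.            *)
Definition ser (n : nat) := seq 'I_n -> int.

Definition szero (n : nat) : ser n := fun _ => 0.
Definition sadd n (f g : ser n) : ser n := fun w => f w + g w.
Definition sopp n (f : ser n) : ser n := fun w => - f w.
Definition smul n (f g : ser n) : ser n :=
  fun w => \sum_(k < (size w).+1) f (take k w) * g (drop k w).
Definition sbr n (f g : ser n) : ser n := sadd (smul f g) (sopp (smul g f)).
Definition sx n (i : 'I_n) : ser n := fun w => if w == [:: i] then 1 else 0.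
Definition ssum n (I : finType) (P : pred I) (F : I -> ser n) : ser n :=
  fun w => \sum_(j | P j) F j w.

Inductive zspan (T : Type) (z : T) (ad : T -> T -> T) (op : T -> T)
    (S : T -> Prop) : T -> Prop :=
| zspan0 : zspan z ad op S z
| zspan_gen x : S x -> zspan z ad op S x
| zspan_opp x : zspan z ad op S x -> zspan z ad op S (op x)
| zspan_add x y : zspan z ad op S x -> zspan z ad op S y ->
    zspan z ad op S (ad x y).

Definition sspan n (S : ser n -> Prop) := zspan (@szero n) (@sadd n) (@sopp n) S.

(* Projective configurations: lines l_0..l_n are the ordinals 'I_n.+1,
   points a finite type P, incidence  inc l p  means  l ≻ p.           *)
Definition proj_config n (P : finType) (inc : 'I_n.+1 -> P -> bool) : Prop :=
  (forall l m : 'I_n.+1, l != m -> exists! p : P, inc l p && inc m p) /\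
  (forall p : P, exists l m : 'I_n.+1, l != m /\ inc l p /\ inc m p).

Definition nondeg_config (P : finType) : Prop := (1 < #|P|)%N.

Section Construction.
Variables (n : nat) (P : finType) (inc : 'I_n.+1 -> P -> bool).

Definition lineof (i : 'I_n) : 'I_n.+1 := lift ord0 i.

Definition P0 (p : P) : bool := ~~ inc ord0 p.

Definition inA (i : 'I_n) (p : P) : bool := P0 p && inc (lineof i) p.

Definition Sp (p : P) : ser n := ssum (fun j : 'I_n => inc (lineof j) p) (@sx n).

Definition not_min (i : 'I_n) (p : P) : Prop :=
  exists j : 'I_n, (j < i)%N /\ inc (lineof j) p.

Definition rbar (i : 'I_n) (p : P) : ser n := sbr (sx i) (Sp p).

Definition Hsub : ser n -> Prop := sspan (fun f => exists i : 'I_n, f = sx i).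
Definition R2 : ser n -> Prop :=
  sspan (fun f => exists (i : 'I_n) (p : P), inA i p /\ not_min i p /\ f = rbar i p).
Definition R3 : ser n -> Prop :=
  sspan (fun f => exists h r, Hsub h /\ R2 r /\ f = sbr h r).

(* A = H^𝒜 ; elements represented by functions 'I_n -> P -> ser n, of
   which only the values at pairs in 𝒜 are relevant. *)
Definition Aelt := 'I_n -> P -> ser n.

Definition Azero : Aelt := fun _ _ => @szero n.
Definition Aadd (a b : Aelt) : Aelt := fun j q => sadd (a j q) (b j q).
Definition Aopp (a : Aelt) : Aelt := fun j q => sopp (a j q).

Definition tau_rep (a : Aelt) (i : 'I_n) (p : P) : ser n :=
  sadd (sbr (sbr (sx i) (a i p)) (Sp p))
       (sbr (sx i) (ssum (fun j : 'I_n => inc (lineof j) p)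
                         (fun j => sbr (sx j) (a j p)))).

(* τ̃ a = 0 in Hom(R_2, P_3): it vanishes on the basis of R_2 *)
Definition in_ker_tau (a : Aelt) : Prop :=
  forall (i : 'I_n) (p : P), inA i p -> not_min i p -> R3 (tau_rep a i p).

Definition a0 (i : 'I_n) (p : P) : Aelt :=
  fun j q => if (j == i) && (q == p) then sx i else @szero n.
Definition a1 (i : 'I_n) (p : P) : Aelt :=
  fun j q => if q == p then sx i else @szero n.
Definition a2 (i : 'I_n) (p1 p2 : P) : Aelt :=
  fun j q => if (j == i) && (q == p1) then Sp p2 else @szero n.

Definition Ugen (a : Aelt) : Prop :=
  (exists i p, inA i p /\ a = a0 i p) \/
  (exists i p, P0 p /\ a = a1 i p) \/
  (exists i p1 p2, inA i p1 /\ inA i p2 /\ a = a2 i p1 p2).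

Definition Usub : Aelt -> Prop := zspan Azero Aadd Aopp Ugen.

End Construction.

From mathcomp Require Import all_boot all_order all_algebra.
From mathcomp Require Import ring.
From Stdlib Require Import FunctionalExtensionality.
Set Implicit Arguments. Unset Strict Implicit. Unset Printing Implicit Defensive.
Import GRing.Theory.
Local Open Scope ring_scope.

(* Bilinearity of the bracket reduces the statement to the three families of
   generators of U, evaluated at a basis element r(i,p) of R_2.
   - a0 contributes only brackets [x_k, x_k] = 0.
   - a1 contributes [[x_i,x_k],S_p] + [x_i,[S_p,x_k]], which by the Jacobi
     identity is -[x_k, r(i,p)], an element of [H, R_2].
   - a2 contributes [x_i,[x_k,S_q]] (plus [[x_i,S_q],S_p] when i = k). Here
     [x_k,S_q] lies in R_2 even when k is the minimal index at q, because
     [S_q,S_q] = 0 expresses it through the other basis elements. *)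

Section SeriesAlgebra.
Variable n : nat.
Implicit Types f g h : ser n.

Lemma ser_ext f g : (forall w, f w = g w) -> f = g.
Proof. exact: functional_extensionality. Qed.

Lemma smul_nil f g : smul f g [::] = f [::] * g [::].
Proof. by rewrite /smul big_ord_recl big_ord0 addr0. Qed.

Lemma smul_cons f g a w :
  smul f g (a :: w) = f [::] * g (a :: w) + smul (fun u => f (a :: u)) g w.
Proof. by rewrite /smul big_ord_recl. Qed.

Lemma smulDl f g h : smul (sadd f g) h = sadd (smul f h) (smul g h).
Proof.
by apply: ser_ext => w; rewrite /smul /sadd -big_split; apply: eq_bigr => k _; exact: mulrDl.
Qed.

Lemma smulDr f g h : smul h (sadd f g) = sadd (smul h f) (smul h g).
Proof.
by apply: ser_ext => w; rewrite /smul /sadd -big_split; apply: eq_bigr => k _; exact: mulrDr.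
Qed.

Lemma smulNl f g : smul (sopp f) g = sopp (smul f g).
Proof. by apply: ser_ext => w; rewrite /smul /sopp -sumrN; apply: eq_bigr => k _; exact: mulNr. Qed.

Lemma smulNr f g : smul g (sopp f) = sopp (smul g f).
Proof. by apply: ser_ext => w; rewrite /smul /sopp -sumrN; apply: eq_bigr => k _; exact: mulrN. Qed.

Lemma smul0l f : smul (@szero n) f = @szero n.
Proof. by apply: ser_ext => w; rewrite /smul big1 // => k _; rewrite mul0r. Qed.

Lemma smul0r f : smul f (@szero n) = @szero n.
Proof. by apply: ser_ext => w; rewrite /smul big1 // => k _; rewrite mulr0. Qed.

Lemma smulZl (c : int) f h w : smul (fun u => c * f u) h w = c * smul f h w.
Proof. by rewrite /smul mulr_sumr; apply: eq_bigr => k _; rewrite mulrA. Qed.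

Lemma smulA f g h : smul (smul f g) h = smul f (smul g h).
Proof.
apply: ser_ext => w; elim: w f g h => [|a w IH] f g h; first by rewrite !smul_nil mulrA.
have split_head : (fun u => smul f g (a :: u)) =
    sadd (fun u => f [::] * g (a :: u)) (smul (fun u => f (a :: u)) g).
  by apply: ser_ext => u; rewrite smul_cons.
rewrite smul_cons smul_nil split_head smulDl /sadd smulZl IH.
by rewrite [smul f _ _]smul_cons smul_cons; ring.
Qed.

Lemma eq_ssum (I : finType) (Q : pred I) (F G : I -> ser n) :
  (forall j, F j = G j) -> ssum Q F = ssum Q G.
Proof. by move=> eqFG; congr ssum; apply: functional_extensionality. Qed.

Lemma ssumD (I : finType) (Q : pred I) (F G : I -> ser n) :
  ssum Q (fun j => sadd (F j) (G j)) = sadd (ssum Q F) (ssum Q G).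
Proof. by apply: ser_ext => w; rewrite /ssum /sadd -big_split. Qed.

Lemma ssumN (I : finType) (Q : pred I) (F : I -> ser n) :
  ssum Q (fun j => sopp (F j)) = sopp (ssum Q F).
Proof. by apply: ser_ext => w; rewrite /ssum /sopp -sumrN. Qed.

Lemma ssum0 (I : finType) (Q : pred I) : ssum Q (fun=> @szero n) = @szero n.
Proof. by apply: ser_ext => w; rewrite /ssum big1. Qed.

Lemma ssumD1 (I : finType) (Q : pred I) (F : I -> ser n) k : Q k ->
  ssum Q F = sadd (F k) (ssum (fun j => Q j && (j != k)) F).
Proof. by move=> Qk; apply: ser_ext => w; rewrite /ssum /sadd (bigD1 k). Qed.

Lemma ssum_delta (I : finType) (Q : pred I) (F : I -> ser n) k : Q k ->
  ssum Q (fun j => if j == k then F j else @szero n) = F k.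
Proof.
move=> Qk; apply: ser_ext => w; rewrite /ssum (bigD1 k) //= eqxx big1 ?addr0 //.
by move=> j /andP[_ /negbTE ->].
Qed.

Lemma smul_suml (I : finType) (Q : pred I) (F : I -> ser n) h :
  smul (ssum Q F) h = ssum Q (fun j => smul (F j) h).
Proof.
apply: ser_ext => w; rewrite /smul /ssum exchange_big /=.
by under eq_bigr do rewrite mulr_suml.
Qed.

Lemma smul_sumr (I : finType) (Q : pred I) (F : I -> ser n) h :
  smul h (ssum Q F) = ssum Q (fun j => smul h (F j)).
Proof.
apply: ser_ext => w; rewrite /smul /ssum exchange_big /=.
by under eq_bigr do rewrite mulr_sumr.
Qed.

Lemma sbr_suml (I : finType) (Q : pred I) (F : I -> ser n) h :
  sbr (ssum Q F) h = ssum Q (fun j => sbr (F j) h).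
Proof. by rewrite /sbr smul_suml smul_sumr ssumD ssumN. Qed.

Lemma sbrDl f g h : sbr (sadd f g) h = sadd (sbr f h) (sbr g h).
Proof. by rewrite /sbr smulDl smulDr; apply: ser_ext => w; rewrite /sadd /sopp; ring. Qed.

Lemma sbrDr f g h : sbr h (sadd f g) = sadd (sbr h f) (sbr h g).
Proof. by rewrite /sbr smulDl smulDr; apply: ser_ext => w; rewrite /sadd /sopp; ring. Qed.

Lemma sbrNl f g : sbr (sopp f) g = sopp (sbr f g).
Proof. by rewrite /sbr smulNl smulNr; apply: ser_ext => w; rewrite /sadd /sopp; ring. Qed.

Lemma sbrNr f g : sbr g (sopp f) = sopp (sbr g f).
Proof. by rewrite /sbr smulNl smulNr; apply: ser_ext => w; rewrite /sadd /sopp; ring. Qed.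

Lemma sbr0l f : sbr (@szero n) f = @szero n.
Proof. by rewrite /sbr smul0l smul0r; apply: ser_ext => w; rewrite /sadd /sopp /szero; ring. Qed.

Lemma sbr0r f : sbr f (@szero n) = @szero n.
Proof. by rewrite /sbr smul0l smul0r; apply: ser_ext => w; rewrite /sadd /sopp /szero; ring. Qed.

Lemma sbrxx f : sbr f f = @szero n.
Proof. by apply: ser_ext => w; rewrite /sbr /sadd /sopp /szero; ring. Qed.

Lemma sbrC f g : sbr f g = sopp (sbr g f).
Proof. by apply: ser_ext => w; rewrite /sbr /sadd /sopp; ring. Qed.

Lemma sbr_jacobi f g h : sadd (sbr (sbr f g) h) (sbr f (sbr h g)) = sopp (sbr g (sbr f h)).
Proof.
rewrite /sbr !(smulDl, smulDr, smulNl, smulNr) !smulA.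
by apply: ser_ext => w; rewrite /sadd /sopp; ring.
Qed.

End SeriesAlgebra.

Lemma sspan_ssum n (S : ser n -> Prop) (I : finType) (Q : pred I) (F : I -> ser n) :
  (forall j, Q j -> sspan S (F j)) -> sspan S (ssum Q F).
Proof.
move=> spanF.
suff span_seq s : sspan S (fun w => \sum_(j <- s | Q j) F j w) by exact: span_seq.
elim: s => [|j s IH].
  rewrite (_ : (fun=> _) = @szero n); first exact: zspan0.
  by apply: ser_ext => w; rewrite big_nil.
have [Qj|nQj] := boolP (Q j).
  rewrite (_ : (fun=> _) = sadd (F j) (fun w => \sum_(i <- s | Q i) F i w)).
    exact: zspan_add (spanF j Qj) IH.
  by apply: ser_ext => w; rewrite big_cons Qj.
rewrite (_ : (fun=> _) = fun w => \sum_(i <- s | Q i) F i w) //.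
by apply: ser_ext => w; rewrite big_cons (negbTE nQj).
Qed.

Section KernelOfTau.
Variables (n : nat) (P : finType) (inc : 'I_n.+1 -> P -> bool).
Implicit Types (a : Aelt n P) (i k : 'I_n) (p q : P).

Lemma Hsub_sx k : Hsub (sx k).
Proof. by apply: zspan_gen; exists k. Qed.

Lemma Hsub_Sp q : Hsub (Sp inc q).
Proof. by apply: sspan_ssum => j _; exact: Hsub_sx. Qed.

Lemma R3_sbr h r : Hsub h -> R2 inc r -> R3 inc (sbr h r).
Proof. by move=> Hh Rr; apply: zspan_gen; exists h, r. Qed.

Lemma R2_sbr_sx_Sp k q : inA inc k q -> R2 inc (sbr (sx k) (Sp inc q)).
Proof.
move=> Akq; have /andP[P0q inc_kq] := Akq.
have [/existsP[j /andP[jk inc_jq]] | kmin] :=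
  boolP [exists j : 'I_n, (j < k)%N && inc (lineof j) q].
  by apply: zspan_gen; exists k, q; do 2!split => //; exists j.
have SqSq0 := sbrxx (Sp inc q).
rewrite {1}/Sp sbr_suml (ssumD1 (Q := fun j => inc (lineof j) q) _ inc_kq) in SqSq0.
have -> : sbr (sx k) (Sp inc q) =
    sopp (ssum (fun j => inc (lineof j) q && (j != k)) (fun j => sbr (sx j) (Sp inc q))).
  apply: ser_ext => w; move/(congr1 (fun f => f w))/eqP: SqSq0.
  by rewrite /sadd /sopp addr_eq0 => /eqP.
apply: zspan_opp; apply: sspan_ssum => j /andP[inc_jq jk].
apply: zspan_gen; exists j, q; split; first by rewrite /inA P0q.
split=> //; exists k; split=> //.
move/existsPn/(_ j): kmin; rewrite inc_jq andbT -leqNgt leq_eqVlt.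
by case/orP=> // /eqP/val_inj kj; rewrite kj eqxx in jk.
Qed.

Lemma tau_rep_add a b i p :
  tau_rep inc (Aadd a b) i p = sadd (tau_rep inc a i p) (tau_rep inc b i p).
Proof.
rewrite /tau_rep /Aadd; under eq_ssum do rewrite sbrDr.
by rewrite ssumD !sbrDr !sbrDl; apply: ser_ext => w; rewrite /sadd; ring.
Qed.

Lemma tau_rep_opp a i p : tau_rep inc (Aopp a) i p = sopp (tau_rep inc a i p).
Proof.
rewrite /tau_rep /Aopp; under eq_ssum do rewrite sbrNr.
by rewrite ssumN !sbrNr !sbrNl; apply: ser_ext => w; rewrite /sadd /sopp; ring.
Qed.

Lemma tau_rep_eq0 a i p : (forall j, a j p = @szero n) -> tau_rep inc a i p = @szero n.
Proof.
move=> a_p0; rewrite /tau_rep a_p0; under eq_ssum do rewrite a_p0 sbr0r.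
by rewrite ssum0 !sbr0r sbr0l; apply: ser_ext => w; rewrite /sadd /szero addr0.
Qed.

Lemma tau_rep_a0 k q i p : tau_rep inc (a0 k q) i p = @szero n.
Proof.
have sbr_a0 j : sbr (sx j) (a0 k q j p) = @szero n.
  by rewrite /a0; case: ifP => [/andP[/eqP-> _] | _]; [exact: sbrxx | exact: sbr0r].
rewrite /tau_rep sbr_a0 sbr0l; under eq_ssum do rewrite sbr_a0.
by rewrite ssum0 sbr0r; apply: ser_ext => w; rewrite /sadd /szero addr0.
Qed.

Lemma R3_tau_rep_a1 k q i p : inA inc i p -> not_min inc i p ->
  R3 inc (tau_rep inc (a1 k q) i p).
Proof.
move=> Aip nmin; have [->|qp] := eqVneq q p; last first.
  rewrite tau_rep_eq0; first exact: zspan0.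
  by move=> j; rewrite /a1 /= eq_sym (negbTE qp).
rewrite /tau_rep /a1 /= eqxx -sbr_suml sbr_jacobi.
apply: zspan_opp; apply: R3_sbr (Hsub_sx k) _.
by apply: zspan_gen; exists i, p.
Qed.

Lemma R3_tau_rep_a2 k p1 p2 i p : inA inc k p1 -> inA inc k p2 ->
  R3 inc (tau_rep inc (a2 inc k p1 p2) i p).
Proof.
move=> /andP[_ inc_kp1] Akp2; have [<-|p1p] := eqVneq p1 p; last first.
  rewrite tau_rep_eq0; first exact: zspan0.
  by move=> j; rewrite /a2 /= [p == _]eq_sym (negbTE p1p) andbF.
rewrite /tau_rep /a2 /= eqxx andbT.
under eq_ssum do rewrite andbT (fun_if (sbr (sx _))) sbr0r.
rewrite (ssum_delta (fun j => sbr (sx j) (Sp inc p2)) inc_kp1).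
apply: zspan_add; last exact: R3_sbr (Hsub_sx i) (R2_sbr_sx_Sp Akp2).
case: (i =P k) => [->|_]; last by rewrite sbr0r sbr0l; exact: zspan0.
by rewrite sbrC; apply: zspan_opp; apply: R3_sbr; [exact: Hsub_Sp | exact: R2_sbr_sx_Sp].
Qed.

Lemma in_ker_tau_Ugen a : Ugen inc a -> in_ker_tau inc a.
Proof.
move=> [[k [q [_ ->]]] | [[k [q [_ ->]]] | [k [p1 [p2 [Akp1 [Akp2 ->]]]]]]] i p Aip nmin.
- by rewrite tau_rep_a0; exact: zspan0.
- exact: R3_tau_rep_a1.
- exact: R3_tau_rep_a2.
Qed.

Lemma in_ker_tau_Usub a : Usub inc a -> in_ker_tau inc a.
Proof.
elim=> [|{}a /in_ker_tau_Ugen //|{}a _ IH|b c _ IHb _ IHc] i p Aip nmin.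
- by rewrite tau_rep_eq0 //; exact: zspan0.
- by rewrite tau_rep_opp; apply: zspan_opp; exact: IH.
- by rewrite tau_rep_add; apply: zspan_add; [exact: IHb | exact: IHc].
Qed.

End KernelOfTau.

Theorem proposition2p4 (n : nat) (P : finType) (inc : 'I_n.+1 -> P -> bool) :
  proj_config inc -> nondeg_config P ->
  forall (a : Aelt n P), Usub inc a -> in_ker_tau inc a.
Proof. by move=> _ _; exact: in_ker_tau_Usub. Qed.
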